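(* Let $A,B$ be unital $k$-algebras and $f:B\to A$ a unital algebra homomorphism. The modulation $A_f$ is an invertible morphism in $\mathsf{Alg}$ (i.e. a Morita equivalence between $A$ and $B$: there is a biunital $(B,A)$-bimodule $Y$ with $A_f\otimes_B Y\cong A$ as $(A,A)$-bimodules and $Y\otimes_A A_f\cong B$ as $(B,B)$-bimodules) if and only if $f$ is an algebra isomorphism.
   Context: $k$ is a commutative ring; all algebras are unital $k$-algebras. The category $\mathsf{Alg}$ has unital $k$-algebras as objects and, as morphisms to $A$ from $B$, isomorphism classes of biunital $(A,B)$-bimodules, composed by $X\otimes_B Y$. The modulation $A_f$ of a unital homomorphism $f:B\to A$ is the $k$-module $A$ with $(A,B)$-bimodule structure $a\cdot x\cdot b=a\,x\,f(b)$. *)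

From HB Require Import structures.
From mathcomp Require Import all_boot all_algebra.
Set Implicit Arguments. Unset Strict Implicit. Unset Printing Implicit Defensive.
Import GRing.Theory.
Local Open Scope ring_scope.

Record is_bimod (k : comPzRingType) (A B : algType k) (M : lmodType k)
    (l : A -> M -> M) (r : M -> B -> M) : Prop := IsBimod {
  bm_lD1 : forall a a' m, l (a + a') m = l a m + l a' m;
  bm_lD2 : forall a m m', l a (m + m') = l a m + l a m';
  bm_rD1 : forall m m' b, r (m + m') b = r m b + r m' b;
  bm_rD2 : forall m b b', r m (b + b') = r m b + r m b';
  bm_lM : forall a a' m, l (a * a') m = l a (l a' m);
  bm_rM : forall m b b', r m (b * b') = r (r m b) b';
  bm_l1 : forall m, l 1 m = m;
  bm_r1 : forall m, r m 1 = m;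
  bm_lr : forall a m b, l a (r m b) = r (l a m) b;
  bm_lZ1 : forall (c : k) a m, l (c *: a) m = c *: l a m;
  bm_lZ2 : forall (c : k) a m, l a (c *: m) = c *: l a m;
  bm_rZ1 : forall (c : k) m b, r (c *: m) b = c *: r m b;
  bm_rZ2 : forall (c : k) m b, r m (c *: b) = c *: r m b
}.

(* t : X -> Y -> Z exhibits Z as the tensor product X (x)_B Y, where rX is the
   right B-action on X and lY the left B-action on Y: t is biadditive and
   B-balanced, and universal among biadditive B-balanced maps into abelian
   groups (unique factorisation through an additive map). *)
Definition biadditive_balanced (k : comPzRingType) (B : algType k)
    (X Y : lmodType k) (M : zmodType) (rX : X -> B -> X) (lY : B -> Y -> Y)
    (g : X -> Y -> M) : Prop :=
  [/\ forall x x' y, g (x + x') y = g x y + g x' y,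
      forall x y y', g x (y + y') = g x y + g x y'
    & forall x b y, g (rX x b) y = g x (lY b y)].

Definition is_tensor (k : comPzRingType) (B : algType k)
    (X Y Z : lmodType k) (rX : X -> B -> X) (lY : B -> Y -> Y)
    (t : X -> Y -> Z) : Prop :=
  biadditive_balanced rX lY t /\
  forall (M : zmodType) (g : X -> Y -> M), biadditive_balanced rX lY g ->
    exists h : Z -> M,
      [/\ forall z z', h (z + z') = h z + h z',
          forall x y, h (t x y) = g x y
        & forall h' : Z -> M, (forall z z', h' (z + z') = h' z + h' z') ->
            (forall x y, h' (t x y) = g x y) -> forall z, h' z = h z].

(* Z lZ rZ : for an (A,B)-bimodule X and a (B,C)-bimodule Y,
   X (x)_B Y is isomorphic to the (A,C)-bimodule Z as (A,C)-bimodules, i.e.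
   Z is a tensor product X (x)_B Y with the induced (A,C)-bimodule and
   k-module structures. *)
Definition tensor_iso (k : comPzRingType) (A B C : algType k)
    (X Y Z : lmodType k)
    (lX : A -> X -> X) (rX : X -> B -> X)
    (lY : B -> Y -> Y) (rY : Y -> C -> Y)
    (lZ : A -> Z -> Z) (rZ : Z -> C -> Z) : Prop :=
  exists t : X -> Y -> Z,
    [/\ is_tensor rX lY t,
        forall a x y, t (lX a x) y = lZ a (t x y),
        forall x y c, t x (rY y c) = rZ (t x y) c
      & forall (c : k) x y, t (c *: x) y = c *: t x y].

(* The modulation A_f of f : B -> A: the k-module A with a.x.b = a x f(b). *)
Definition modL (k : comPzRingType) (A : algType k) (a x : A) : A := a * x.
Definition modR (k : comPzRingType) (A B : algType k) (f : B -> A)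
    (x : A) (b : B) : A := x * f b.

(* If A_f is invertible with inverse Y, then Y (x)_A A_f ~= B and Y (x)_A A ~= Y
   identify Y with B as a left B-module, so Y is generated by one element e with
   b.e = e.f(b).  Then A_f (x)_B Y ~= A forces every element of A to be
   u f(b) for the unit-like element u = 1 (x) e, which commutes with f(B) and
   has a left inverse; cancelling u shows f is onto, and the identification
   Y ~= B shows f is injective.  Conversely, for f bijective the bimodule
   {}_f A with b.y.a = f(b) y a is an inverse, both tensor products being
   multiplication. *)
From HB Require Import structures.
From mathcomp Require Import all_boot all_algebra.
Set Implicit Arguments. Unset Strict Implicit. Unset Printing Implicit Defensive.
Import GRing.Theory.
Local Open Scope ring_scope.

Lemma tensor_ext (k : comPzRingType) (B : algType k) (X Y Z : lmodType k)
    (rX : X -> B -> X) (lY : B -> Y -> Y) (t : X -> Y -> Z)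
    (M : zmodType) (h h' : Z -> M) :
  is_tensor rX lY t ->
  {morph h : z z' / z + z'} -> {morph h' : z z' / z + z'} ->
  (forall x y, h (t x y) = h' (t x y)) -> h =1 h'.
Proof.
move=> [[tD1 tD2 tbal] tU] hD h'D hh' z.
have hbal : biadditive_balanced rX lY (fun x y => h (t x y)).
  by split=> *; rewrite ?tD1 ?tD2 ?hD ?tbal.
have [h0 [_ _ h0U]] := tU _ _ hbal.
by rewrite (h0U h) // (h0U h').
Qed.

Section RegularTensor.

Variables (k : comPzRingType) (A : algType k) (Y Z : lmodType k).
Variable rY : Y -> A -> Y.
Hypotheses (rYD1 : forall y y' a, rY (y + y') a = rY y a + rY y' a)
           (rYD2 : forall y a a', rY y (a + a') = rY y a + rY y a')
           (rYM : forall y a a', rY y (a * a') = rY (rY y a) a')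
           (rY1 : forall y, rY y 1 = y).
Variable t : Y -> A -> Z.
Hypothesis t_tensor : is_tensor rY (@modL k A) t.

Lemma tensor_regularE y a : t y a = t (rY y a) 1.
Proof. by case: t_tensor => -[_ _ tbal] _; rewrite tbal /modL mulr1. Qed.

Lemma tensor_regular_bij : bijective (fun y => t y 1).
Proof.
have [[tD1 _ _] tU] := t_tensor.
have actbal : biadditive_balanced rY (@modL k A) rY.
  by split=> // y a a'; rewrite rYM.
have [h [hD hE _]] := tU _ _ actbal.
apply: (Bijective (g := h)) => [y | z]; first by rewrite /= hE rY1.
apply: (tensor_ext (h := fun z => t (h z) 1) (h' := id) t_tensor) => //.
- by move=> z1 z2; rewrite hD tD1.
- by move=> y a; rewrite hE -tensor_regularE.
Qed.

End RegularTensor.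

Section ModulationInvertible.

Variables (k : comPzRingType) (A B : algType k) (f : {lrmorphism B -> A}).
Variables (Y : lmodType k) (lY : B -> Y -> Y) (rY : Y -> A -> Y).
Hypothesis Ybimod : is_bimod lY rY.
Variables (t1 : A -> Y -> A) (t2 : Y -> A -> B).
Hypotheses (t1_tensor : is_tensor (@modR k A B f) lY t1)
           (t1L : forall a x y, t1 (modL a x) y = modL a (t1 x y))
           (t1R : forall x y a, t1 x (rY y a) = modL (t1 x y) a).
Hypotheses (t2_tensor : is_tensor rY (@modL k A) t2)
           (t2L : forall b y x, t2 (lY b y) x = modL b (t2 y x))
           (t2R : forall y x b, t2 y (modR f x b) = modL (t2 y x) b).

Let Phi y := t2 y 1.

Lemma Phi_bij : bijective Phi.
Proof.
by case: Ybimod => *; exact: tensor_regular_bij t2_tensor.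
Qed.

Lemma PhiD y y' : Phi (y + y') = Phi y + Phi y'.
Proof. by case: t2_tensor => -[t2D1 _ _] _; rewrite /Phi t2D1. Qed.

Lemma PhiL b y : Phi (lY b y) = b * Phi y.
Proof. exact: t2L. Qed.

Lemma PhiR y b : Phi (rY y (f b)) = Phi y * b.
Proof.
rewrite /Phi -(tensor_regularE t2_tensor).
by rewrite -[f b]mul1r t2R.
Qed.

Section Generator.

Variable e : Y.
Hypothesis Phi_e : Phi e = 1.

Let Phi_inj : injective Phi := bij_inj Phi_bij.

Lemma rY_e_Phi y : rY e (f (Phi y)) = y.
Proof. by apply: Phi_inj; rewrite PhiR Phi_e mul1r. Qed.

Lemma lY_e b : lY b e = rY e (f b).
Proof. by apply: Phi_inj; rewrite PhiR PhiL Phi_e mulr1 mul1r. Qed.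

Let u := t1 1 e.

Lemma t1E x y : t1 x y = x * u * f (Phi y).
Proof.
by rewrite -[x in t1 x]mulr1 t1L -{1}(rY_e_Phi y) t1R /modL mulrA.
Qed.

Lemma u_commute b : u * f b = f b * u.
Proof.
have [[_ _ t1bal] _] := t1_tensor.
rewrite /u; have := t1R 1 e (f b); rewrite -lY_e -t1bal /modR /modL mul1r => <-.
by have := t1L (f b) 1 e; rewrite /modL mulr1.
Qed.

Lemma u_left_invertible : exists v, v * u = 1.
Proof.
have [[t1D1 t1D2 _] t1U] := t1_tensor.
have multbal : biadditive_balanced (@modR k A B f) lY (fun x y => x * f (Phi y)).
  split=> [x x' y | x y y' | x b y]; first by rewrite mulrDl.
    by rewrite PhiD rmorphD mulrDr.
  by rewrite /modR PhiL rmorphM mulrA.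
have [h [hD hE _]] := t1U _ _ multbal.
exists (h 1); symmetry.
apply: (tensor_ext (h := id) (h' := fun z => h z * u) t1_tensor) => //.
- by move=> z z'; rewrite hD mulrDl.
- by move=> x y; rewrite hE t1E -!mulrA u_commute.
Qed.

Lemma f_Phi_rY_e a : f (Phi (rY e a)) = a.
Proof.
have [v vu] := u_left_invertible.
have uE : u * f (Phi (rY e a)) = u * a.
  by have := t1E 1 (rY e a); rewrite t1R mul1r => <-.
by rewrite -[LHS]mul1r -vu -mulrA uE mulrA vu mul1r.
Qed.

Lemma bijective_of_generator : bijective f.
Proof.
apply: (Bijective (g := fun a => Phi (rY e a))) => [b | a] /=.
  by rewrite PhiR Phi_e mul1r.
exact: f_Phi_rY_e.
Qed.

End Generator.

Lemma bijective_of_inverse_modulation : bijective f.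
Proof.
have [Psi _ PsiK] := Phi_bij.
exact: (@bijective_of_generator (Psi 1)).
Qed.

End ModulationInvertible.

Section InverseModulation.

Variables (k : comPzRingType) (A B : algType k) (f : {lrmorphism B -> A}).

Definition modLf (b : B) (y : A) : A := f b * y.

Lemma is_bimod_modLf : is_bimod modLf (@modL k A).
Proof.
split=> *; rewrite /modLf /modL.
- by rewrite rmorphD mulrDl.
- by rewrite mulrDr.
- by rewrite mulrDl.
- by rewrite mulrDr.
- by rewrite rmorphM mulrA.
- by rewrite mulrA.
- by rewrite rmorph1 mul1r.
- by rewrite mulr1.
- by rewrite mulrA.
- by rewrite linearZ scalerAl.
- by rewrite scalerAr.
- by rewrite scalerAl.
- by rewrite scalerAr.
Qed.

Lemma tensor_iso_modulation_modLf : (forall a, exists b, f b = a) ->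
  @tensor_iso k A B A A A A
    (@modL k A) (@modR k A B f) modLf (@modL k A) (@modL k A) (@modL k A).
Proof.
move=> f_surj; exists *%R; split=> [||x y c|c x y] /=.
- split.
    by split=> [x x' y | x y y' | x b y]; rewrite /modR /modLf ?mulrDl ?mulrDr ?mulrA.
  move=> M g [_ gD gbal]; exists (g 1); split=> [z z'|x y|h' _ h'E z].
  + exact: gD.
  + have [b <-] := f_surj x.
    by have := gbal 1 b y; rewrite /modR /modLf mul1r.
  + by rewrite -h'E mul1r.
- by move=> a x y; rewrite /modL mulrA.
- exact: mulrA.
- by rewrite scalerAl.
Qed.

Variable g : A -> B.
Hypotheses (fK : cancel f g) (gK : cancel g f).

Lemma tensor_iso_modLf_modulation :
  @tensor_iso k B A B A A B
    modLf (@modL k A) (@modL k A) (@modR k A B f) (@modL k B) (@modL k B).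
Proof.
have [_ gM] := can2_monoid_morphism fK gK.
have [gZ gD] := can2_semilinear fK gK.
exists (fun y x => g (y * x)); split=> [||x y c|c x y].
- split.
    by split=> [y y' x | y x x' | y a x]; rewrite /modL ?mulrDl ?mulrDr ?gD ?mulrA.
  move=> M h [_ hD hbal]; exists (fun b => h 1 (f b)); split=> [z z'|y x|h' _ h'E z].
  + by rewrite rmorphD hD.
  + by rewrite gK -hbal /modL mul1r.
  + by rewrite -h'E mul1r fK.
- by move=> b y x; rewrite /modLf /modL -mulrA gM fK.
- by rewrite /modR /modL mulrA gM fK.
- by rewrite -scalerAl gZ.
Qed.

End InverseModulation.

Theorem lemma2p3 (k : comPzRingType) (A B : algType k)
    (f : {lrmorphism B -> A}) :
  (exists (Y : lmodType k) (lY : B -> Y -> Y) (rY : Y -> A -> Y),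
     [/\ is_bimod lY rY,
         (* A_f (x)_B Y ~= A as (A,A)-bimodules *)
         @tensor_iso k A B A A Y A
           (@modL k A) (@modR k A B f) lY rY (@modL k A) (@modL k A)
       & (* Y (x)_A A_f ~= B as (B,B)-bimodules *)
         @tensor_iso k B A B Y A B
           lY rY (@modL k A) (@modR k A B f) (@modL k B) (@modL k B)]) <->
  bijective f.
Proof.
split=> [[Y [lY [rY [Ybimod [t1 [t1_tensor t1L t1R _]] [t2 [t2_tensor t2L t2R _]]]]]]
        | [g fK gK]].
  exact: (bijective_of_inverse_modulation Ybimod t1_tensor t1L t1R t2_tensor t2L t2R).
exists A, (modLf f), (@modL k A); split.
- exact: is_bimod_modLf.
- by apply: tensor_iso_modulation_modLf => a; exists (g a).
- exact: tensor_iso_modLf_modulation fK gK.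
Qed.
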